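(* Let $\phi_i:\mathbb{R}\to\mathbb{R}$ be twice differentiable, let $x_i\in\mathbb{R}^d\setminus\{0\}$, $y_i\in\mathbb{R}$, and let $f_i(w)=\phi_i(x_i^\top w-y_i)$, assumed non-negative for all $w\in\mathbb{R}^d$. Fix $w^t\in\mathbb{R}^d$ and write $f_i:=f_i(w^t)$, $a_i:=\phi_i'(x_i^\top w^t-y_i)$, $h_i:=\phi_i''(x_i^\top w^t-y_i)$, so that $\nabla f_i(w^t)=a_ix_i$ and $\nabla^2 f_i(w^t)=h_ix_ix_i^\top$. Consider the projection problem $$\min_{w\in\mathbb{R}^d}\ \tfrac12\|w-w^t\|^2\quad\text{s.t.}\quad f_i(w^t)+\langle \nabla f_i(w^t),w-w^t\rangle+\tfrac12\langle \nabla^2 f_i(w^t)(w-w^t),w-w^t\rangle=0 .$$ (i) If $a_i^2-2h_if_i\ge 0$ (and $h_i\neq 0$, $a_i\neq 0$, so that the following expression is defined), then an optimal solution of this problem is $$w^{t+1}=w^t-\frac{a_i}{h_i}\left(1-\frac{\sqrt{a_i^2-2h_if_i}}{|a_i|}\right)\frac{x_i}{\|x_i\|^2}.$$ (ii) If $a_i^2-2h_if_i<0$, then necessarily $h_i>0$, and the point $$w^{t+1}=w^t-\frac{a_i}{h_i}\frac{x_i}{\|x_i\|^2}$$ is a minimizer over $w\in\mathbb{R}^d$ of the local quadratic $f_i(w^t)+\langle \nabla f_i(w^t),w-w^t\rangle+\tfrac12\langle \nabla^2 f_i(w^t)(w-w^t),w-w^t\rangle$.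
   Context: This is the ''SP2'' step for generalized linear models: projecting $w^t$ onto the zero set of the second-order Taylor expansion of $f_i$ at $w^t$. *)

From HB Require Import structures.
From mathcomp Require Import all_boot all_order all_algebra.
From mathcomp Require Import all_classical all_reals all_analysis.
Set Implicit Arguments. Unset Strict Implicit. Unset Printing Implicit Defensive.
Import Order.TTheory GRing.Theory Num.Theory.
Local Open Scope ring_scope.

Definition dotp (R : realType) (d : nat) (u v : 'rV[R]_d) : R :=
  \sum_(k < d) u 0 k * v 0 k.

Definition sqnorm (R : realType) (d : nat) (u : 'rV[R]_d) : R := dotp u u.

Definition glm (R : realType) (d : nat) (phi : R -> R) (x : 'rV[R]_d) (y : R)
  (w : 'rV[R]_d) : R := phi (dotp x w - y).

Definition glm_a (R : realType) (d : nat) (phi : R -> R) (x : 'rV[R]_d) (y : R)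
  (wt : 'rV[R]_d) : R := derive1 phi (dotp x wt - y).
Definition glm_h (R : realType) (d : nat) (phi : R -> R) (x : 'rV[R]_d) (y : R)
  (wt : 'rV[R]_d) : R := derive1n 2 phi (dotp x wt - y).

Definition glm_grad (R : realType) (d : nat) (phi : R -> R) (x : 'rV[R]_d) (y : R)
  (wt : 'rV[R]_d) : 'rV[R]_d := glm_a phi x y wt *: x.
Definition glm_hess (R : realType) (d : nat) (phi : R -> R) (x : 'rV[R]_d) (y : R)
  (wt : 'rV[R]_d) : 'M[R]_d := glm_h phi x y wt *: (x^T *m x).

Definition taylor2 (R : realType) (d : nat) (phi : R -> R) (x : 'rV[R]_d) (y : R)
  (wt w : 'rV[R]_d) : R :=
  glm phi x y wt + dotp (glm_grad phi x y wt) (w - wt)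
  + 2^-1 * dotp ((w - wt) *m glm_hess phi x y wt) (w - wt).

(* The second-order model of f at wt depends on w only through u = <x, w - wt>:
   it is the quadratic q(u) = f + a u + h u^2 / 2.  The point wt - (c / |x|^2) x
   realises u = -c at squared distance c^2 / |x|^2, while by Cauchy-Schwarz every
   w realising u lies at squared distance at least u^2 / |x|^2 from wt.  Hence the
   projection onto the zero set of the model is wt shifted along x to the root of q
   of least modulus.  Completing the square, 2 h q(u) = (h u + a)^2 - (a^2 - 2 h f),
   so the roots satisfy h u + a = +-r with r = sqrt (a^2 - 2 h f), and the root of
   least modulus is the one where h u + a has the sign of a.  When a^2 - 2 h f < 0,
   nonnegativity of f forces h > 0 and q is minimised at u = -a/h. *)
From HB Require Import structures.
From mathcomp Require Import all_boot all_order all_algebra.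
From mathcomp Require Import all_classical all_reals all_analysis.
From mathcomp Require Import ring lra.
Set Implicit Arguments. Unset Strict Implicit.
Import Order.TTheory GRing.Theory Num.Theory.
Local Open Scope ring_scope.

Section QuadraticModel.
Variable R : numFieldType.
Implicit Types f a h u : R.

Definition quad_model f a h u : R := f + a * u + 2^-1 * (h * u ^+ 2).

Lemma quad_model_square f a h u :
  2 * h * quad_model f a h u = (h * u + a) ^+ 2 - (a ^+ 2 - 2 * h * f).
Proof. by rewrite /quad_model; field. Qed.

Lemma quad_model_eq0 f a h u : h != 0 ->
  (quad_model f a h u == 0) = ((h * u + a) ^+ 2 == a ^+ 2 - 2 * h * f).
Proof.
move=> hnz; rewrite -[RHS]subr_eq0 -quad_model_square.
by rewrite !mulf_eq0 pnatr_eq0 (negbTE hnz).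
Qed.

End QuadraticModel.

Lemma quad_model_min (R : realFieldType) (f a h u : R) : 0 < h ->
  quad_model f a h (- (a / h)) <= quad_model f a h u.
Proof.
move=> hgt0; rewrite -subr_ge0.
have -> : quad_model f a h u - quad_model f a h (- (a / h))
    = 2^-1 * h * (u + a / h) ^+ 2 by rewrite /quad_model; field; rewrite gt_eqF.
by rewrite mulr_ge0 ?sqr_ge0 // mulr_ge0 ?invr_ge0 ?(ltW hgt0).
Qed.

Definition quad_small_root (R : rcfType) (f a h : R) : R :=
  - (a / h * (1 - Num.sqrt (a ^+ 2 - 2 * h * f) / `|a|)).

Section SmallRoot.
Variables (R : rcfType) (f a h : R).
Hypotheses (discr_ge0 : 0 <= a ^+ 2 - 2 * h * f) (hnz : h != 0) (anz : a != 0).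
Let r := Num.sqrt (a ^+ 2 - 2 * h * f).

Lemma quad_small_rootE : h * quad_small_root f a h + a = Num.sg a * r.
Proof.
have sgE : a / `|a| = Num.sg a by rewrite {1}[a]numEsg mulfK // normr_eq0.
by rewrite -sgE /quad_small_root -/r; field; rewrite normr_eq0 anz.
Qed.

Lemma quad_model_small_root : quad_model f a h (quad_small_root f a h) = 0.
Proof.
apply/eqP; rewrite quad_model_eq0 // quad_small_rootE -(sqr_sqrtr discr_ge0) -/r.
by rewrite exprMn sqr_sg anz mul1r.
Qed.

Lemma quad_small_root_min (u : R) : quad_model f a h u = 0 ->
  quad_small_root f a h ^+ 2 <= u ^+ 2.
Proof.
move=> /eqP; rewrite quad_model_eq0 // -(sqr_sqrtr discr_ge0) -/r => /eqP root_u.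
set v := quad_small_root f a h.
have norm_root : `|h * u + a| = r.
  by rewrite -sqrtr_sqr root_u sqrtr_sqr ger0_norm ?sqrtr_ge0.
(* both roots satisfy h t + a = +-r; the small one makes (h t + a) a = |a| r maximal *)
have hv_sqr : (h * v) ^+ 2 = r ^+ 2 - 2 * (`|a| * r) + a ^+ 2.
  have -> : (h * v) ^+ 2 = (Num.sg a * r - a) ^+ 2 by rewrite -quad_small_rootE addrK.
  by rewrite normrEsg sqrrB exprMn sqr_sg anz mul1r; ring.
have hu_sqr : (h * u) ^+ 2 = r ^+ 2 - 2 * ((h * u + a) * a) + a ^+ 2.
  by rewrite -root_u; ring.
have cross_le : (h * u + a) * a <= `|a| * r.
  by rewrite mulrC -norm_root -normrM ler_norm.
have : (h * v) ^+ 2 <= (h * u) ^+ 2 by rewrite hv_sqr hu_sqr; lra.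
by rewrite !exprMn ler_pM2l // exprn_even_gt0.
Qed.

End SmallRoot.

Section DotProduct.
Variables (R : realType) (d : nat).
Implicit Types u v w : 'rV[R]_d.

Lemma dotpC u v : dotp u v = dotp v u.
Proof. by apply: eq_bigr => k _; rewrite mulrC. Qed.

Lemma dotpDr u v w : dotp w (u + v) = dotp w u + dotp w v.
Proof. by rewrite /dotp -big_split; apply: eq_bigr => k _; rewrite mxE mulrDr. Qed.

Lemma dotpZr c u w : dotp w (c *: u) = c * dotp w u.
Proof. by rewrite /dotp mulr_sumr; apply: eq_bigr => k _; rewrite mxE mulrCA. Qed.

Lemma dotpNr u w : dotp w (- u) = - dotp w u.
Proof. by rewrite -scaleN1r dotpZr mulN1r. Qed.

Lemma dotpBr u v w : dotp w (u - v) = dotp w u - dotp w v.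
Proof. by rewrite dotpDr dotpNr. Qed.

Lemma dotpBl u v w : dotp (u - v) w = dotp u w - dotp v w.
Proof. by rewrite dotpC dotpBr !(dotpC w). Qed.

Lemma dotpZl c u w : dotp (c *: u) w = c * dotp u w.
Proof. by rewrite dotpC dotpZr dotpC. Qed.

Lemma dotp0l v : dotp 0 v = 0.
Proof. by rewrite /dotp big1 // => k _; rewrite mxE mul0r. Qed.

Lemma mul_row_tr u v : u *m v^T = (dotp u v)%:M.
Proof. by apply/matrixP => i j; rewrite !ord1 !mxE; apply: eq_bigr => k _; rewrite mxE. Qed.

Lemma sqnorm_ge0 u : 0 <= sqnorm u.
Proof. by apply: sumr_ge0 => k _; rewrite -expr2 sqr_ge0. Qed.

Lemma sqnorm_eq0 u : (sqnorm u == 0) = (u == 0).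
Proof.
apply/idP/eqP => [/eqP u0|->]; last by rewrite /sqnorm dotp0l.
have /psumr_eq0P coord0 : \sum_(k < d) u 0 k ^+ 2 = 0.
  by rewrite -[RHS]u0; apply: eq_bigr => k _; rewrite expr2.
apply/matrixP => i j; rewrite ord1 mxE.
by apply/eqP; rewrite -sqrf_eq0 coord0 // => k _; rewrite sqr_ge0.
Qed.

Lemma sqnorm_gt0 u : (0 < sqnorm u) = (u != 0).
Proof. by rewrite lt_def sqnorm_eq0 sqnorm_ge0 andbT. Qed.

Lemma sqnormZ c u : sqnorm (c *: u) = c ^+ 2 * sqnorm u.
Proof. by rewrite /sqnorm dotpZl dotpZr mulrA expr2. Qed.

Lemma sqnormN u : sqnorm (- u) = sqnorm u.
Proof. by rewrite -scaleN1r sqnormZ sqrrN expr1n mul1r. Qed.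

Lemma sqnormB u v : sqnorm (u - v) = sqnorm u - 2 * dotp u v + sqnorm v.
Proof. by rewrite /sqnorm dotpBl !dotpBr (dotpC v u); ring. Qed.

Lemma dotp_sqr_le u v : dotp u v ^+ 2 <= sqnorm u * sqnorm v.
Proof.
have [->|unz] := eqVneq u 0.
  by rewrite /sqnorm !dotp0l expr0n mul0r.
have N_gt0 : 0 < sqnorm u by rewrite sqnorm_gt0.
(* the residual of v after projecting it on u has nonnegative squared norm *)
have := sqnorm_ge0 (v - (dotp u v / sqnorm u) *: u).
rewrite sqnormB sqnormZ dotpZr (dotpC v u).
have -> : sqnorm v - 2 * (dotp u v / sqnorm u * dotp u v)
    + (dotp u v / sqnorm u) ^+ 2 * sqnorm u
    = (sqnorm u * sqnorm v - dotp u v ^+ 2) / sqnorm u by field; rewrite gt_eqF.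
by rewrite pmulr_lge0 ?invr_gt0 // subr_ge0.
Qed.

Lemma dotp_step x w c : x != 0 -> dotp x (w - (c / sqnorm x) *: x - w) = - c.
Proof.
move=> xnz; rewrite addrAC subrr add0r dotpNr dotpZr -/(sqnorm x).
by rewrite mulfVK // sqnorm_eq0.
Qed.

Lemma sqnorm_step x w c : x != 0 ->
  sqnorm (w - (c / sqnorm x) *: x - w) = c ^+ 2 / sqnorm x.
Proof.
move=> xnz; have Nnz : sqnorm x != 0 by rewrite sqnorm_eq0.
by rewrite addrAC subrr add0r sqnormN sqnormZ; field.
Qed.

End DotProduct.

Lemma taylor2_quad_model (R : realType) (d : nat) (phi : R -> R)
    (x : 'rV[R]_d) (y : R) (wt w : 'rV[R]_d) :
  taylor2 phi x y wt w =
  quad_model (glm phi x y wt) (glm_a phi x y wt) (glm_h phi x y wt) (dotp x (w - wt)).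
Proof.
rewrite /taylor2 /glm_grad /glm_hess dotpZl -scalemxAr mulmxA mul_row_tr.
by rewrite mul_scalar_mx !dotpZl (dotpC (w - wt) x) /quad_model expr2.
Qed.

Theorem lemma1 (R : realType) (d : nat) (phi : R -> R) (x : 'rV[R]_d) (y : R)
    (wt : 'rV[R]_d) :
  (forall z : R, derivable phi z 1) ->
  (forall z : R, derivable (derive1 phi) z 1) ->
  x != 0 ->
  (forall w : 'rV[R]_d, 0 <= glm phi x y w) ->
  let f := glm phi x y wt in
  let a := glm_a phi x y wt in
  let h := glm_h phi x y wt in
  (* (i) *)
  (0 <= a ^+ 2 - 2 * h * f -> h != 0 -> a != 0 ->
     let w1 := wt - (a / h * (1 - Num.sqrt (a ^+ 2 - 2 * h * f) / `|a|)
                      / sqnorm x) *: x in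
     taylor2 phi x y wt w1 = 0 /\
     (forall w : 'rV[R]_d, taylor2 phi x y wt w = 0 ->
        2^-1 * sqnorm (w1 - wt) <= 2^-1 * sqnorm (w - wt)))
  /\
  (* (ii) *)
  (a ^+ 2 - 2 * h * f < 0 ->
     0 < h /\
     let w1 := wt - (a / h / sqnorm x) *: x in
     forall w : 'rV[R]_d, taylor2 phi x y wt w1 <= taylor2 phi x y wt w).
Proof.
(* the model only sees the values a and h, so differentiability of phi is not needed *)
move=> _ _ xnz f_ge0 f a h; have N_gt0 : 0 < sqnorm x by rewrite sqnorm_gt0.
split=> [discr_ge0 hnz anz w1 | discr_lt0].
  have u1E : dotp x (w1 - wt) = quad_small_root f a h by rewrite dotp_step.
  rewrite taylor2_quad_model u1E quad_model_small_root //; split=> // w.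
  rewrite taylor2_quad_model => /(quad_small_root_min discr_ge0 hnz anz) u_min.
  have w1_dist : sqnorm (w1 - wt) = quad_small_root f a h ^+ 2 / sqnorm x.
    by rewrite sqnorm_step // /quad_small_root sqrrN.
  rewrite ler_pM2l ?invr_gt0 // w1_dist ler_pdivrMr // mulrC.
  exact: le_trans u_min (dotp_sqr_le x (w - wt)).
have f0 : 0 <= f := f_ge0 wt.
have h_gt0 : 0 < h by have := sqr_ge0 a; nra.
split=> // w1 w; rewrite !taylor2_quad_model dotp_step //.
exact: quad_model_min.
Qed.
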